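(* Let $f\in K[z]$ be a polynomial of degree at least $2$ and let $\mu$ be an $f$-invariant Radon probability measure on $J(f)$. If $\log_p f^\#$ is $\mu$-integrable, then $$L(f,\mu)=\int_{\mathsf{P}^1}\log_p\|f'\|_\xi\,d\mu(\xi).$$
   Context: $K$ is an algebraically closed field of characteristic $0$, complete with respect to a nontrivial nonarchimedean absolute value. Set $p=\mathrm{res.char}(K)$ if positive and $p=e$ otherwise; $\log_p$ is the logarithm to base $p$. $\mathsf{P}^1$ is the Berkovich projective line over $K$, $\mathsf{A}^1=\mathsf{P}^1\setminus\{\infty\}$; $\|g\|_\xi$ is the value at $g\in K[z]$ of the seminorm $\xi\in\mathsf{A}^1$. $\mathcal{K}(f)$ is the set of $\xi\in\mathsf{A}^1$ with $f^n(\xi)\not\to\infty$, $J(f)=\partial\mathcal{K}(f)$. The chordal derivative is $f^\#(\xi)=\frac{\max(1,\|z\|_\xi)^2}{\max(1,\|f\|_\xi)^2}\|f'\|_\xi$, and $L(f,\mu)=\int\log_p f^\#\,d\mu$. *)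

From HB Require Import structures.
From mathcomp Require Import all_boot all_order all_algebra.
From mathcomp Require Import all_classical all_reals all_analysis.
Set Implicit Arguments. Unset Strict Implicit. Unset Printing Implicit Defensive.
Import Order.TTheory GRing.Theory Num.Theory.
Import numFieldNormedType.Exports.
Local Open Scope classical_set_scope.
Local Open Scope ring_scope.

Definition nonarch_complete_abs (K : fieldType) (R : realType) (absK : K -> R) : Prop :=
  (forall x, 0 <= absK x) /\
  [/\ (forall x, absK x = 0 <-> x = 0),
      (forall x y, absK (x * y) = absK x * absK y),
      (forall x y, absK (x + y) <= Num.max (absK x) (absK y)),
      (exists x, absK x != 0 /\ absK x != 1) &
      (forall u : nat -> K,
         (forall e : R, 0 < e -> exists N, forall m n, (N <= m)%N -> (N <= n)%N ->
            absK (u m - u n) < e) ->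
         exists l : K, (fun n => absK (u n - l)) @ \oo --> (0 : R))].

(* p = residue characteristic if positive, e otherwise.  The residue field
   has characteristic the prime q iff |q| < 1. *)
Definition resp (K : fieldType) (R : realType) (absK : K -> R) : R :=
  let P := [set q : nat | prime q /\ absK q%:R < 1] in
  if pselect (exists q, P q) then (xget 0%N P)%:R else expR 1.

Definition elog_p (K : fieldType) (R : realType) (absK : K -> R) (x : R) : \bar R :=
  if x == 0 then -oo%E else (ln x / ln (resp absK))%:E.

(* Ambient space: real functions on K[z] with the pointwise (product) topology;
   the Berkovich affine line is the subset of multiplicative seminorms on K[z]
   extending absK, with the induced (weak) topology. *)
Notation berkT K R := {ptws {poly K%type} -> R%type}.

Definition berkA1 (K : fieldType) (R : realType) (absK : K -> R) : set (berkT K R) :=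
  [set xi | [/\ (forall g, 0 <= xi g),
                (forall g h, xi (g + h) <= xi g + xi h),
                (forall g h, xi (g * h) = xi g * xi h) &
                (forall c, xi c%:P = absK c)]].

Notation berkM K R := (g_sigma_algebraType (@open (berkT K R))).

Definition berk_act (K : fieldType) (R : realType) (f : {poly K}) (xi : berkT K R)
  : berkT K R := fun g => xi (g \Po f).

(* filled Julia set K(f): points of A^1 whose orbit does not tend to infinity,
   i.e. ||z||_{f^n(xi)} does not tend to +oo *)
Definition filledJ (K : fieldType) (R : realType) (absK : K -> R) (f : {poly K})
  : set (berkT K R) :=
  [set xi | berkA1 absK xi /\
     ~ ((fun n => iter n (berk_act f) xi 'X) @ \oo --> +oo)].

Definition rel_interior (K : fieldType) (R : realType) (absK : K -> R)
  (A : set (berkT K R)) : set (berkT K R) :=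
  [set xi | exists U : set (berkT K R), [/\ open U, U xi & U `&` berkA1 absK `<=` A]].

(* Julia set J(f) = boundary of K(f) in A^1 (A^1 is closed in the ambient space,
   so the closure is the relative closure) *)
Definition juliaJ (K : fieldType) (R : realType) (absK : K -> R) (f : {poly K})
  : set (berkT K R) :=
  closure (filledJ absK f) `\` rel_interior absK (filledJ absK f).

Definition fsharp (K : fieldType) (R : realType) (f : {poly K}) (xi : berkT K R) : R :=
  Num.max 1 (xi 'X) ^+ 2 / Num.max 1 (xi f) ^+ 2 * xi f^`().

Definition Lyap (K : fieldType) (R : realType) (absK : K -> R) (f : {poly K})
  (mu : probability (berkM K R) R) : \bar R :=
  (\int[mu]_xi elog_p absK (fsharp f xi))%E.

Definition radon (K : fieldType) (R : realType) (mu : probability (berkM K R) R) : Prop :=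
  forall B : set (berkM K R), measurable B ->
    mu B = ereal_sup [set mu C | C in [set C : set (berkM K R) |
                         @compact (berkT K R) C /\ C `<=` B]].

Definition f_invariant (K : fieldType) (R : realType) (f : {poly K})
  (mu : probability (berkM K R) R) : Prop :=
  forall B : set (berkM K R), measurable B -> mu (berk_act f @^-1` B) = mu B.

(* On the trapping region [{||z|| <= r0, ||f|| <= b0}], which contains J(f) since a point
   with [||z|| >= r0] escapes to infinity, the chordal derivative factors as
   [log_p f^# = log_p ||f'|| + g - g o f] with [g = 2 log_p max(1, ||z||)].  Truncating [g]
   at a constant does not affect this identity but makes [g] bounded, so the coboundary
   [g - g o f] integrates to 0 against the f-invariant measure [mu]; as [mu] is carried by
   J(f), integrating the factorisation gives the formula. *)

From HB Require Import structures.
From mathcomp Require Import all_boot all_order all_algebra.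
From mathcomp Require Import all_classical all_reals all_analysis.
From mathcomp Require Import ring lra measurable_realfun.
Import Order.TTheory GRing.Theory Num.Theory.
Import numFieldNormedType.Exports.
Local Open Scope classical_set_scope.
Local Open Scope ring_scope.

Section BerkovichTopology.
Context {K : fieldType} {R : realType}.

Lemma continuous_eval (g : {poly K}) : continuous (fun xi : berkT K R => xi g).
Proof. exact: (@proj_continuous _ (fun _ : {poly K} => R) g). Qed.

Lemma measurable_eval (g : {poly K}) :
  measurable_fun [set: berkM K R] (fun xi : berkM K R => (xi : berkT K R) g).
Proof.
apply: (measurability _ (RGenOpens.measurableE R)).
move=> _ [_ [a [b ->] <-]]; rewrite setTI; apply: sub_sigma_algebra.
by move/continuousP: (continuous_eval g); apply; exact: interval_open.
Qed.

Lemma closed_eval_le (g : {poly K}) (a : R) :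
  closed [set xi : berkT K R | xi g <= a].
Proof.
apply: (@preimage_closed _ _ (fun xi : berkT K R => xi g) [set x | x <= a]).
- by move=> xi _; exact: continuous_eval.
- exact: closed_le.
Qed.

Lemma closed_eval_ge (g : {poly K}) (a : R) :
  closed [set xi : berkT K R | a <= xi g].
Proof.
apply: (@preimage_closed _ _ (fun xi : berkT K R => xi g) [set x | a <= x]).
- by move=> xi _; exact: continuous_eval.
- exact: closed_ge.
Qed.

Lemma continuous_berk_act (f : {poly K}) :
  continuous (berk_act f : berkT K R -> berkT K R).
Proof.
move=> xi.
have FF : Filter (berk_act f @ xi) := fmap_filter _ (nbhs_filter xi).
pose Tc := (fun i : {poly K} => Topological.class
    (initial_topology (fun f : (forall i : {poly K}, (R : topologicalType)) => f i))).
apply: (proj2 (@cvg_sup _ _ Tc _ _ FF)) => g A [_ [[B oB <-] Bxi BA]].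
have : nbhs xi ((fun eta : berkT K R => eta (g \Po f)) @^-1` B).
  by apply: continuous_eval; exact: open_nbhs_nbhs.
by apply: filterS => eta Beta; exact: BA.
Qed.

Lemma measurable_berk_act (f : {poly K}) :
  measurable_fun [set: berkM K R] (berk_act f : berkM K R -> berkM K R).
Proof.
apply: measurability => // _ [A oA <-]; rewrite setTI; apply: sub_sigma_algebra.
by move/continuousP: (continuous_berk_act f); apply.
Qed.

Lemma open_rel_interior (absK : K -> R) (A : set (berkT K R)) :
  open (rel_interior absK A).
Proof.
rewrite openE => xi [U [oU Uxi UA]].
apply: (@filterS _ _ _ U); first by move=> y Uy; exists U.
exact: open_nbhs_nbhs.
Qed.

Lemma measurable_juliaJ (absK : K -> R) (f : {poly K}) :
  measurable (juliaJ absK f : set (berkM K R)).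
Proof.
apply: measurableD; last by apply: sub_sigma_algebra; exact: open_rel_interior.
rewrite -[X in measurable X]setCK; apply: measurableC; apply: sub_sigma_algebra.
exact/closed_openC/closed_closure.
Qed.

End BerkovichTopology.

Lemma measurable_elog_p (K : fieldType) (R : realType) (absK : K -> R) :
  measurable_fun [set: R] (elog_p absK).
Proof.
apply: measurable_fun_ifT; last exact/measurable_EFinP/measurable_funM/measurable_cst.
- by apply: measurable_fun_eqr; [exact: measurable_id|exact: measurable_cst].
- exact: measurable_cst.
Qed.

Section AbsoluteValue.
Context {K : fieldType} {R : realType} {absK : K -> R}.
Hypothesis habs : nonarch_complete_abs absK.

Lemma abs_ge0 x : 0 <= absK x.
Proof. by case: habs. Qed.

Lemma abs_eq0 x : (absK x == 0) = (x == 0).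
Proof. by case: habs => _ [h _ _ _ _]; apply/eqP/eqP => /h. Qed.

Lemma absM x y : absK (x * y) = absK x * absK y.
Proof. by case: habs => _ [_ h _ _ _]. Qed.

Lemma abs0 : absK 0 = 0.
Proof. by apply/eqP; rewrite abs_eq0. Qed.

Lemma abs1 : absK 1 = 1.
Proof.
have a10 : absK 1 != 0 by rewrite abs_eq0 oner_neq0.
by apply: (mulIf a10); rewrite mul1r -absM mulr1.
Qed.

Lemma absN x : absK (- x) = absK x.
Proof.
suff absN1 : absK (-1) = 1 by rewrite -mulN1r absM absN1 mul1r.
apply/eqP; rewrite -(pexpr_eq1 (n := 2)) ?abs_ge0 //.
by rewrite expr2 -absM mulrNN mulr1 abs1.
Qed.

Section Seminorm.
Context {xi : berkT K R}.
Hypothesis hxi : berkA1 absK xi.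

Lemma snorm_ge0 g : 0 <= xi g.
Proof. by case: hxi. Qed.

Lemma snormC c : xi c%:P = absK c.
Proof. by case: hxi. Qed.

Lemma snormM g h : xi (g * h) = xi g * xi h.
Proof. by case: hxi. Qed.

Lemma snormD g h : xi (g + h) <= xi g + xi h.
Proof. by case: hxi. Qed.

Lemma snormN g : xi (- g) = xi g.
Proof. by rewrite -mulN1r -polyCN snormM snormC absN abs1 mul1r. Qed.

Lemma snorm_sum n (F : 'I_n -> {poly K}) :
  xi (\sum_(i < n) F i) <= \sum_(i < n) xi (F i).
Proof.
elim: n F => [|n IH] F; first by rewrite !big_ord0 -polyC0 snormC abs0.
by rewrite !big_ord_recr /=; apply: le_trans (snormD _ _) _; rewrite lerD2r.
Qed.

Lemma snormZXn c i : xi (c *: 'X^i) = absK c * xi 'X ^+ i.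
Proof.
rewrite -mul_polyC snormM snormC; congr (_ * _).
elim: i => [|i IH]; first by rewrite !expr0 -polyC1 snormC abs1.
by rewrite exprSr snormM IH exprSr.
Qed.

Lemma snorm_le_coef_sum f :
  xi f <= \sum_(i < size f) absK f`_i * xi 'X ^+ i.
Proof.
rewrite -{1}[f]coefK poly_def.
apply: le_trans (snorm_sum (size f) (fun i : 'I_(size f) => f`_i *: 'X^i)) _.
by apply: ler_sum => i _; rewrite snormZXn.
Qed.

Lemma lead_coef_le_snorm f :
  absK (lead_coef f) * xi 'X ^+ (size f).-1 <=
  xi f + \sum_(i < (size f).-1) absK f`_i * xi 'X ^+ i.
Proof.
case sf : (size f) => [|d] /=.
  by move/eqP: sf; rewrite size_poly_eq0 => /eqP ->; rewrite lead_coef0 abs0 mul0r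
    big_ord0 addr0 snorm_ge0.
pose low := \sum_(i < d) f`_i *: 'X^i.
have f_split : f = low + f`_d *: 'X^d.
  by rewrite -{1}[f]coefK poly_def sf big_ord_recr.
have lead_term : f`_d *: 'X^d = f - low by rewrite {2}f_split addrC addKr.
rewrite lead_coefE sf /= -snormZXn lead_term.
apply: le_trans (snormD _ _) _; rewrite snormN lerD2l.
apply: le_trans (snorm_sum d (fun i : 'I_d => f`_i *: 'X^i)) _.
by apply: ler_sum => i _; rewrite snormZXn.
Qed.

End Seminorm.
End AbsoluteValue.

Lemma berkA1_act {K : fieldType} {R : realType} {absK : K -> R} (f : {poly K})
  {xi : berkT K R} : berkA1 absK xi -> berkA1 absK (berk_act f xi).
Proof.
case=> xi_ge0 xiD xiM xiC; split => [g|g h|g h|c]; rewrite /berk_act.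
- exact: xi_ge0.
- by rewrite comp_polyD; exact: xiD.
- by rewrite comp_polyM; exact: xiM.
- by rewrite comp_polyC; exact: xiC.
Qed.

(* Used with [c = |lead f|], [r = ||z||_xi], [s = ||f||_xi] and [P] the norm bound of the
   lower-order terms of [f]. *)
Lemma escape_estimate (F : realFieldType) (c S r s P : F) (e : nat) :
  0 < c -> 0 <= S -> 1 + (S + 2) / c <= r ->
  c * r ^+ e.+2 <= s + P -> P <= S * r ^+ e.+1 -> r + 1 <= s.
Proof.
move=> c_gt0 S_ge0 r_large lead_le P_le.
have r_ge1 : 1 <= r by apply: le_trans r_large; rewrite lerDl divr_ge0 //; lra.
have cr_large : c + S + 2 <= c * r.
  by have := ler_wpM2l (ltW c_gt0) r_large; rewrite mulrDr mulr1 mulrCA divff ?gt_eqF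
    // mulr1 addrA.
have r_le_q : r <= r ^+ e.+1 by rewrite -{1}(expr1 r) ler_weXn2l.
rewrite exprS in lead_le.
set q := r ^+ e.+1 in r_le_q lead_le P_le.
nra.
Qed.

Definition escape_radius {K : fieldType} {R : realType} (absK : K -> R)
  (f : {poly K}) : R :=
  1 + (\sum_(i < (size f).-1) absK f`_i + 2) / absK (lead_coef f).

(* An upper bound for [xi f] on the closed disk of radius [escape_radius]. *)
Definition escape_bound {K : fieldType} {R : realType} (absK : K -> R)
  (f : {poly K}) : R :=
  \sum_(i < size f) absK f`_i * escape_radius absK f ^+ i.

Definition trapping_region {K : fieldType} {R : realType} (absK : K -> R)
  (f : {poly K}) : set (berkT K R) :=
  [set xi | [/\ xi 'X <= escape_radius absK f, xi f <= escape_bound absK f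
              & 0 <= xi f^`()]].

Section Escape.
Context {K : fieldType} {R : realType} {absK : K -> R} {f : {poly K}}.
Hypotheses (habs : nonarch_complete_abs absK) (hdeg : (2 < size f)%N).

Local Notation escape_radius := (escape_radius absK f).
Local Notation trapping_region := (trapping_region absK f).

Lemma escape_radius_ge1 : 1 <= escape_radius.
Proof.
rewrite lerDl; apply: divr_ge0; last exact: abs_ge0.
by rewrite addr_ge0 // sumr_ge0 // => i _; exact: abs_ge0.
Qed.

Lemma escape_step {xi : berkT K R} : berkA1 absK xi ->
  escape_radius <= xi 'X -> xi 'X + 1 <= xi f.
Proof.
move=> hxi r_large.
have lead_gt0 : 0 < absK (lead_coef f).
  rewrite lt_def abs_ge0 // andbT abs_eq0 // lead_coef_eq0 -size_poly_eq0.
  by rewrite -lt0n; apply: leq_trans hdeg.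
have deg : (size f).-1 = (size f - 3)%N.+2.
  by move: hdeg; case: (size f) => [|[|[|n]]] //= _; rewrite !subSS subn0.
apply: (@escape_estimate _ _ _ _ _ (\sum_(i < (size f).-1) absK f`_i * xi 'X ^+ i)
  (size f - 3) lead_gt0 _ r_large).
- by rewrite sumr_ge0 // => i _; exact: abs_ge0.
- by rewrite -deg; exact: lead_coef_le_snorm.
rewrite mulr_suml; apply: ler_sum => i _.
rewrite ler_wpM2l ?abs_ge0 // ler_weXn2l //; last by rewrite -ltnS -deg.
exact: le_trans escape_radius_ge1 r_large.
Qed.

Lemma berkA1_iter n {xi : berkT K R} :
  berkA1 absK xi -> berkA1 absK (iter n (berk_act f) xi).
Proof. by move=> hxi; elim: n => //= n; exact: berkA1_act. Qed.

Lemma escape_iter {xi : berkT K R} : berkA1 absK xi ->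
  escape_radius <= xi 'X -> forall n, escape_radius + n%:R <= iter n (berk_act f) xi 'X.
Proof.
move=> hxi r_large; elim=> [|n IH] /=; first by rewrite addr0.
rewrite [X in _ <= X]/berk_act comp_polyX -natr1 addrA.
apply: le_trans (escape_step (berkA1_iter n hxi) _); first by rewrite lerD2r.
by apply: le_trans IH; rewrite lerDl.
Qed.

Lemma filledJ_lt_escape_radius {xi : berkT K R} :
  filledJ absK f xi -> xi 'X < escape_radius.
Proof.
case=> hxi bounded_orbit; rewrite ltNge; apply/negP => r_large; apply: bounded_orbit.
apply: (ger_cvgy _ cvgr_idn); apply: nearW => n.
apply: le_trans (escape_iter hxi r_large n); rewrite lerDr.
by apply: le_trans escape_radius_ge1.
Qed.

Lemma filledJ_sub_trapping_region : filledJ absK f `<=` trapping_region.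
Proof.
move=> xi fJxi; have xi_lt := filledJ_lt_escape_radius fJxi.
case: fJxi => hxi _; split; first exact: ltW.
- apply: le_trans (snorm_le_coef_sum habs hxi f) _.
  apply: ler_sum => i _; rewrite ler_wpM2l ?abs_ge0 //.
  apply: lerXn2r; rewrite ?nnegrE ?(snorm_ge0 hxi) ?(ltW xi_lt) //.
  exact: le_trans ler01 escape_radius_ge1.
- exact: snorm_ge0 hxi _.
Qed.

Lemma closed_trapping_region : closed trapping_region.
Proof.
have -> : trapping_region = [set xi | xi 'X <= escape_radius]
    `&` [set xi | xi f <= escape_bound absK f] `&` [set xi | 0 <= xi f^`()].
  by apply/seteqP; split => xi /=; [case| case=> [[]]].
by apply: closedI; [apply: closedI|]; [exact: closed_eval_le|exact: closed_eval_le|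
  exact: closed_eval_ge].
Qed.

Lemma juliaJ_sub_trapping_region : juliaJ absK f `<=` trapping_region.
Proof.
move=> xi [cl_xi _]; have := closureS filledJ_sub_trapping_region cl_xi.
by rewrite -(proj1 (closure_id _) closed_trapping_region).
Qed.

End Escape.

Definition clip_bound {K : fieldType} {R : realType} (absK : K -> R) (f : {poly K}) : R :=
  Num.max 1 (Num.max (escape_radius absK f) (escape_bound absK f)).

(* [2 log_p max(1, ||z||_xi)], truncated at [clip_bound] so that it is bounded on
   the whole ambient space; on the trapping region the truncation is inactive both
   at [xi] and at [f(xi)]. *)
Definition chordal_potential {K : fieldType} {R : realType} (absK : K -> R)
  (f : {poly K}) (xi : berkT K R) : R :=
  2 * (ln (Num.min (Num.max 1 (xi 'X)) (clip_bound absK f)) / ln (resp absK)).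

Section ChordalPotential.
Context {K : fieldType} {R : realType} (absK : K -> R) (f : {poly K}).

Local Notation clip_bound := (clip_bound absK f).
Local Notation potential := (chordal_potential absK f).

Lemma clip_boundE (t : R) :
  t <= Num.max (escape_radius absK f) (escape_bound absK f) ->
  Num.min (Num.max 1 t) clip_bound = Num.max 1 t.
Proof. by move=> t_le; apply/min_l/le_max2. Qed.

Lemma chordal_potential_bound (xi : berkT K R) :
  `|potential xi| <= 2 * (ln clip_bound * `|(ln (resp absK))^-1|).
Proof.
rewrite /chordal_potential normrM normrM ger0_norm // ler_pM2l // ler_wpM2r //.
have clip_ge1 : 1 <= clip_bound by rewrite le_max lexx.
set m := Num.min _ _.
have m_ge1 : 1 <= m by rewrite le_min clip_ge1 andbT le_max lexx.
rewrite ger0_norm ?ln_ge0 // ler_ln ?posrE ?ge_min ?lexx ?orbT //.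
- exact: lt_le_trans ltr01 m_ge1.
- exact: lt_le_trans ltr01 clip_ge1.
Qed.

Lemma measurable_chordal_potential :
  measurable_fun [set: berkM K R] (potential : berkM K R -> R).
Proof.
apply: measurable_funM; first exact: measurable_cst.
apply: measurable_funM; last exact: measurable_cst.
apply: measurableT_comp; first exact: measurable_ln.
apply: measurable_minr; last exact: measurable_cst.
by apply: measurable_maxr; [exact: measurable_cst|exact: measurable_eval].
Qed.

Lemma elog_fsharp_coboundary (xi : berkT K R) : trapping_region absK f xi ->
  elog_p absK (fsharp f xi) =
  (elog_p absK (xi f^`()) + (potential xi - potential (berk_act f xi))%:E)%E.
Proof.
case=> xiX_le xif_le xif'_ge0.
rewrite /chordal_potential /berk_act comp_polyX !clip_boundE ?le_max ?xiX_le ?xif_le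
  ?orbT // /fsharp.
set M1 := Num.max 1 (xi 'X); set M2 := Num.max 1 (xi f); set y := xi f^`().
have M1_gt0 : 0 < M1 by rewrite lt_max ltr01.
have M2_gt0 : 0 < M2 by rewrite lt_max ltr01.
have [->|y_neq0] := eqVneq y 0; first by rewrite mulr0 /elog_p eqxx.
have y_gt0 : 0 < y by rewrite lt_def y_neq0 xif'_ge0.
have M_gt0 : 0 < M1 ^+ 2 / M2 ^+ 2 by rewrite divr_gt0 ?exprn_gt0.
rewrite /elog_p (gt_eqF (mulr_gt0 M_gt0 y_gt0)) (gt_eqF y_gt0) -EFinD; congr EFin.
rewrite lnM ?posrE // lnM ?posrE ?invr_gt0 ?exprn_gt0 //.
by rewrite lnV ?posrE ?exprn_gt0 // !lnXn //; ring.
Qed.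

End ChordalPotential.

Section InvariantIntegral.
Context {d : measure_display} {T : measurableType d} {R : realType}.
Context {mu : {finite_measure set T -> \bar R}} {phi : T -> T}.
Hypotheses (mphi : measurable_fun [set: T] phi)
  (mu_phi : forall B, measurable B -> mu (phi @^-1` B) = mu B).

Lemma integrable_bounded {a : T -> R} {k : R} : measurable_fun [set: T] a ->
  (forall x, `|a x| <= k) -> mu.-integrable [set: T] (EFin \o a).
Proof.
move=> ma a_le; apply: measurable_bounded_integrable => //.
  by rewrite ltey_eq fin_num_measure.
by exists k; split; rewrite ?num_real // => M kM x _; apply: le_trans (a_le x) (ltW kM).
Qed.

Lemma integral_comp_invariant (g : T -> \bar R) : measurable_fun [set: T] g ->
  mu.-integrable [set: T] (g \o phi) ->
  (\int[mu]_x (g \o phi) x = \int[mu]_x g x)%E.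
Proof.
move=> mg ig.
have ig' : mu.-integrable (phi @^-1` [set: T]) (g \o phi) by rewrite preimage_setT.
have := integral_pushforward mphi mg ig' measurableT.
rewrite preimage_setT => <-.
by apply: eq_measure_integral => B mB _; rewrite [LHS]mu_phi.
Qed.

Lemma integrable_coboundary {a : T -> R} {k : R} : measurable_fun [set: T] a ->
  (forall x, `|a x| <= k) -> mu.-integrable [set: T] (fun x => (a x - a (phi x))%:E).
Proof.
move=> ma a_le; apply: (integrable_bounded (k := k + k)).
  exact: measurable_funB (measurableT_comp ma mphi).
by move=> x; apply: le_trans (ler_normB _ _) (lerD (a_le x) (a_le (phi x))).
Qed.

Lemma integral_coboundary {a : T -> R} {k : R} : measurable_fun [set: T] a ->
  (forall x, `|a x| <= k) -> (\int[mu]_x (a x - a (phi x))%:E = 0)%E.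
Proof.
move=> ma a_le.
have ia := integrable_bounded ma a_le.
have iaphi : mu.-integrable [set: T] (EFin \o a \o phi).
  by apply: (integrable_bounded (measurableT_comp ma mphi)) => x; exact: a_le.
rewrite (integralB _ ia iaphi) // integral_comp_invariant //.
  by rewrite subee // integrable_fin_num.
exact/measurable_EFinP.
Qed.

End InvariantIntegral.

Lemma integral_ae_eqD {d : measure_display} {T : measurableType d} {R : realType}
  {mu : {measure set T -> \bar R}} {F G : T -> \bar R} {h : T -> R} :
  measurable_fun [set: T] G -> mu.-integrable [set: T] F ->
  mu.-integrable [set: T] (fun x => (h x)%:E) ->
  ae_eq mu [set: T] F (fun x => G x + (h x)%:E)%E ->
  (\int[mu]_x F x = \int[mu]_x G x + \int[mu]_x (h x)%:E)%E.
Proof.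
move=> mG iF ih FGh.
have [mF _] := integrableP _ _ _ iF; have [mh _] := integrableP _ _ _ ih.
have mGh : measurable_fun [set: T] (fun x => G x + (h x)%:E)%E.
  exact: emeasurable_funD.
have iGh : mu.-integrable [set: T] (fun x => G x + (h x)%:E)%E.
  have absFGh : (\int[mu]_x `|F x| = \int[mu]_x `|G x + (h x)%:E|)%E.
    apply: ae_eq_integral => //; [exact: measurableT_comp|exact: measurableT_comp|].
    by apply: filterS FGh => x /[apply] /= ->.
  by apply/integrableP; split; rewrite // -absFGh; case/integrableP: iF.
have iG : mu.-integrable [set: T] G.
  have -> : G = (fun x => G x + (h x)%:E - (h x)%:E)%E by apply/funext => x; rewrite addeK.
  exact: integrableB.
by rewrite (ae_eq_integral _ _ _ _ _ FGh) // integralD.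
Qed.

Theorem lemma4p1 (K : closedFieldType) (R : realType) (absK : K -> R)
  (habs : nonarch_complete_abs absK) (hchar : [pchar K] =i pred0)
  (f : {poly K}) (hdeg : (2 < size f)%N)
  (mu : probability (berkM K R) R)
  (hradon : radon mu) (hinv : f_invariant f mu)
  (hsupp : mu (~` juliaJ absK f) = 0%E)
  (hint : mu.-integrable setT (fun xi => elog_p absK (fsharp f xi))) :
  Lyap absK f mu = (\int[mu]_xi elog_p absK (xi f^`()))%E.
Proof.
pose a := chordal_potential absK f.
have a_le xi := chordal_potential_bound absK f xi.
have ma := measurable_chordal_potential absK f.
have fsharpE : ae_eq mu [set: berkM K R] (fun xi => elog_p absK (fsharp f xi))
    (fun xi => elog_p absK ((xi : berkT K R) f^`()) + (a xi - a (berk_act f xi))%:E)%E.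
  exists (~` juliaJ absK f); split => //; first by apply: measurableC; exact: measurable_juliaJ.
  move=> xi /= not_fsharpE Jxi; apply: not_fsharpE => _.
  exact/elog_fsharp_coboundary/(juliaJ_sub_trapping_region habs hdeg).
rewrite /Lyap (integral_ae_eqD _ hint _ fsharpE).
- by rewrite (integral_coboundary (measurable_berk_act f) hinv ma a_le) adde0.
- by apply: measurableT_comp; [exact: measurable_elog_p|exact: measurable_eval].
- exact: (integrable_coboundary (mu := mu) (measurable_berk_act f) ma a_le).
Qed.
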